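(* Let $p>1$ and let $\{(x_i,y_i)\}_{i=1}^n\subset\mathbb{R}^d\times\{\pm1\}$ be linearly separable with $\max_i\|x_i\|_q<C$ for some constant $C$, where $1/p+1/q=1$. Let $L(w)=\frac1n\sum_{i=1}^n\ell(y_i\langle w,x_i\rangle)$ with $\ell$ decreasing, convex, not attaining its minimum, $\inf\ell=0$, and suppose $\ell$ has an exponential tail: $\lim_{z\to\infty}\ell(z)e^{az}=b$ for some constants $a>0$, $b>0$. Then the regularized direction $\bar w^{\mathrm{reg}}_p$ with respect to the $\ell_p$-norm exists and equals the max-margin direction $\bar w^{\mathrm{mm}}_p$.
   Context: The regularization path is $\bar w_p(B)=\arg\min_{\|w\|_p\le B}L(w)$; if $\lim_{B\to\infty}\bar w_p(B)/B$ exists it is the regularized direction $\bar w^{\mathrm{reg}}_p$. The margin of $w$ is $\gamma(w)=\min_i y_i\langle x_i,w\rangle$, and the max-margin direction is $\bar w^{\mathrm{mm}}_p=\arg\max_{\|w\|_p\le1}\min_{i}y_i\langle x_i,w\rangle$. Linear separability means there is $w^*$ with $\mathrm{sign}(\langle w^*,x_i\rangle)=y_i$ for all $i$. *)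

From HB Require Import structures.
From mathcomp Require Import all_boot all_order all_algebra.
From mathcomp Require Import all_classical all_reals all_analysis.
Set Implicit Arguments. Unset Strict Implicit. Unset Printing Implicit Defensive.
Import Order.TTheory GRing.Theory Num.Theory.
Import numFieldNormedType.Exports.
Local Open Scope ring_scope.

Section Defs.
Variables (R : realType) (d n : nat).

Definition lpnorm (p : R) (w : 'rV[R]_d) : R :=
  (\sum_(j < d) `|w ord0 j| `^ p) `^ p^-1.

Definition dotp (w x : 'rV[R]_d) : R := \sum_(j < d) w ord0 j * x ord0 j.

Definition loss (ell : R -> R) (x : 'I_n -> 'rV[R]_d) (y : 'I_n -> R)
  (w : 'rV[R]_d) : R :=
  n%:R^-1 * \sum_(i < n) ell (y i * dotp w (x i)).

Definition lin_separable (x : 'I_n -> 'rV[R]_d) (y : 'I_n -> R) : Prop :=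
  exists ws : 'rV[R]_d, forall i, Num.sg (dotp ws (x i)) = y i.

Definition reg_minimizer (p : R) (ell : R -> R) (x : 'I_n -> 'rV[R]_d)
  (y : 'I_n -> R) (B : R) (w : 'rV[R]_d) : Prop :=
  lpnorm p w <= B /\
  forall v, lpnorm p v <= B -> loss ell x y w <= loss ell x y v.

Definition margin_ge (x : 'I_n -> 'rV[R]_d) (y : 'I_n -> R)
  (w : 'rV[R]_d) (g : R) : Prop :=
  forall i, g <= y i * dotp (x i) w.

(* w is (an element of) argmax_{||w||_p <= 1} min_i y_i <x_i, w>:
   gamma(w) >= gamma(v) for every v in the unit ball *)
Definition max_margin (p : R) (x : 'I_n -> 'rV[R]_d) (y : 'I_n -> R)
  (w : 'rV[R]_d) : Prop :=
  lpnorm p w <= 1 /\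
  forall v, lpnorm p v <= 1 ->
    forall g, margin_ge x y v g -> margin_ge x y w g.

End Defs.

From HB Require Import structures.
From mathcomp Require Import all_boot all_order all_algebra.
From mathcomp Require Import all_classical all_reals all_analysis.
From mathcomp Require Import ring lra.
Import Order.TTheory GRing.Theory Num.Theory.
Import numFieldNormedType.Exports.
Local Open Scope classical_set_scope.
Local Open Scope ring_scope.

(* Both optimisation problems live on the compact l_p ball: the loss is continuous
   (convex functions are) and the margin is a minimum of linear forms.  For p > 1
   the ball is strictly convex, so the max-margin vector wmm is unique and even
   isolated: for every e > 0 there is g < margin wmm such that every vector of the
   unit ball with margin above g is e-close to wmm.  By the exponential tail,
   ell (B * g) / ell (B * margin wmm) grows like expR (a * B * (margin wmm - g)),
   so for large B any vector of norm B whose normalised margin is at most g has a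
   larger loss than B *: wmm; hence the normalised regularised minimisers
   eventually have margin above g and converge to wmm. *)

Section convex_nonincreasing.
Context {R : realType} (ell : R -> R).
Hypothesis ell_nonincr : {homo ell : s t /~ s <= t}.
Hypothesis ell_convex : forall s t c : R, 0 <= c <= 1 ->
  ell (c * s + (1 - c) * t) <= c * ell s + (1 - c) * ell t.

Lemma convex_nonincreasing_dist_le z t : `|t - z| <= 1 ->
  `|ell t - ell z| <= `|t - z| * (ell (z - 1) - ell z).
Proof.
have [zt|tz] := leP z t => tz1.
- have tz0 : 0 <= t - z by rewrite subr_ge0.
  have h01 : 0 <= t - z <= 1 by rewrite tz0 -(ger0_norm tz0).
  have h1 : 0 < 1 + (t - z) by lra.
  have := ell_convex (z - 1) t ((t - z) / (1 + (t - z))).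
  have -> : (t - z) / (1 + (t - z)) * (z - 1) + (1 - (t - z) / (1 + (t - z))) * t = z.
    by field; rewrite gt_eqF.
  have c01 : 0 <= (t - z) / (1 + (t - z)) <= 1.
    by rewrite divr_ge0 ?ler_pdivrMr ?mul1r; lra.
  move=> /(_ c01) /(ler_wpM2l (ltW h1)).
  have -> : (1 + (t - z)) * ((t - z) / (1 + (t - z)) * ell (z - 1) +
      (1 - (t - z) / (1 + (t - z))) * ell t) = (t - z) * ell (z - 1) + ell t.
    by field; rewrite gt_eqF.
  move=> conv.
  rewrite distrC !ger0_norm ?subr_ge0 ?ell_nonincr //; nra.
- have h01 : 0 <= z - t <= 1.
    by move: tz1; rewrite distrC ger0_norm ?subr_ge0 ?(ltW tz) // => ->; rewrite andbT.
  have := @ell_convex (z - 1) z (z - t) h01.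
  have -> : (z - t) * (z - 1) + (1 - (z - t)) * z = t by ring.
  move=> conv.
  rewrite (distrC t z) !ger0_norm ?subr_ge0 ?ell_nonincr ?(ltW tz) //; nra.
Qed.

Lemma continuous_convex_nonincreasing : continuous ell.
Proof.
move=> z; apply/cvgrPdist_le => e e0.
have lip0 : 0 <= ell (z - 1) - ell z by rewrite subr_ge0 ell_nonincr // gerBl.
have K0 : 0 < ell (z - 1) - ell z + 1 by lra.
apply/nbhs_normP; exists (Num.min 1 (e / (ell (z - 1) - ell z + 1))).
  by rewrite /= lt_min ltr01 divr_gt0.
move=> t /=; rewrite lt_min -normrN opprB => /andP[/ltW t1].
rewrite ltr_pdivlMr // => te.
rewrite -normrN opprB.
have := convex_nonincreasing_dist_le z t t1; have := normr_ge0 (t - z); nra.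
Qed.
End convex_nonincreasing.

Section exponential_tail.
Context {R : realType} {ell : R -> R} {a b : R}.
Hypotheses (a_gt0 : 0 < a) (b_gt0 : 0 < b).
Hypothesis ell_tail : (fun z => ell z * expR (a * z)) @ +oo --> b.

Lemma exp_tail_ratio_gt N g1 g2 : 0 < N -> 0 < g1 < g2 ->
  \forall B \near +oo, N * ell (B * g2) < ell (B * g1).
Proof.
move=> N0 /andP[g10 g12]; have g2g1 : 0 < g2 - g1 by rewrite subr_gt0.
have b2_gt0 : 0 < b / 2 by rewrite divr_gt0.
have [M [_ tailM]] := proj1 (cvgrPdist_lt _ _) ell_tail _ b2_gt0.
near=> B.
have B0 : 0 < B by near: B; exact: nbhs_pinfty_gt.
have MB1 : M < B * g1.
  by rewrite -ltr_pdivrMr //; near: B; exact: nbhs_pinfty_gt (num_real _).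
have MB2 : M < B * g2 by apply: lt_le_trans MB1 _; rewrite ler_pM2l // ltW.
have lo : b / 2 < ell (B * g1) * expR (a * (B * g1)).
  by have := tailM _ MB1; have := ler_norm (b - ell (B * g1) * expR (a * (B * g1))); lra.
have hi : ell (B * g2) * expR (a * (B * g2)) < 3 * b / 2.
  have := tailM _ MB2; rewrite distrC.
  by have := ler_norm (ell (B * g2) * expR (a * (B * g2)) - b); lra.
have gap : 3 * N <= expR (a * B * (g2 - g1)).
  apply: le_trans (expR_ge1Dx _).
  have : 3 * N / (a * (g2 - g1)) < B by near: B; exact: nbhs_pinfty_gt (num_real _).
  by rewrite ltr_pdivrMr ?mulr_gt0 // (mulrC B) mulrAC; lra.
have E12 : expR (a * (B * g2)) = expR (a * (B * g1)) * expR (a * B * (g2 - g1)).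
  by rewrite -expRD; congr expR; ring.
rewrite E12 in hi.
move: lo hi gap; set L1 := ell _; set L2 := ell _; set E := expR _; set D := expR _.
move=> lo hi gap; have E0 : 0 < E := expR_gt0 _; have D0 : 0 < D := expR_gt0 _.
clearbody L1 L2 E D.
rewrite -(ltr_pM2r (mulr_gt0 E0 D0)).
have s1 : N * L2 * (E * D) < N * (3 * b / 2) by rewrite -mulrA ltr_pM2l.
have s2 : N * (3 * b / 2) <= b / 2 * D.
  rewrite -subr_ge0 (_ : _ - _ = b / 2 * (D - 3 * N)); last ring.
  by apply: mulr_ge0; [exact: ltW | rewrite subr_ge0].
have s3 : b / 2 * D < L1 * E * D by rewrite ltr_pM2r.
by rewrite mulrA; lra.
Unshelve. all: by end_near.
Qed.
End exponential_tail.

Section strictly_convex_powR.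
Context {R : realType} (p : R).
Hypothesis p_gt1 : 1 < p.

Let p_gt0 : 0 < p. Proof. exact: lt_trans p_gt1. Qed.

(* Young's inequality for the pair t, m ^ (p - 1) with the conjugate exponent p / (p - 1) *)
Lemma powR_tangent_le m t : 0 < m -> 0 <= t ->
  m `^ p + p * m `^ (p - 1) * (t - m) <= t `^ p.
Proof.
move=> m0 t0; have p1 : 0 < p - 1 by rewrite subr_gt0.
have q0 : 0 < p / (p - 1) by rewrite divr_gt0.
have pq : p^-1 + (p / (p - 1))^-1 = 1 by rewrite invf_div; field; rewrite gt_eqF.
have := conjugate_powR t0 (powR_ge0 m (p - 1)) p_gt0 q0 pq.
rewrite -powRrM (_ : (p - 1) * _ = p); last by field; rewrite gt_eqF.
rewrite invf_div -(mulr_powRB1 (ltW m0) p_gt0) => /(ler_wpM2l (ltW p_gt0)).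
rewrite (_ : p * (_ + _) = t `^ p + (p - 1) * (m * m `^ (p - 1))); last first.
  by field; rewrite gt_eqF.
lra.
Qed.

Lemma powR_tangent_lt m t : 0 < m -> 0 <= t -> t != m ->
  m `^ p + p * m `^ (p - 1) * (t - m) < t `^ p.
Proof.
move=> m0 t0 tm; pose c := (t + m) / 2.
have c0 : 0 < c by rewrite /c; lra.
(* chain the tangents at m and at the midpoint c: the slope gains p * (c^(p-1) - m^(p-1)) *)
have Tc := powR_tangent_le _ _ c0 t0; have Tm := powR_tangent_le _ _ m0 (ltW c0).
have gain : 0 < (c `^ (p - 1) - m `^ (p - 1)) * (c - m).
  have p1 : 0 < p - 1 by rewrite subr_gt0.
  have [cm|mc|/eqP] := ltgtP c m.
  - by rewrite nmulr_rgt0 ?subr_lt0 // gt0_ltr_powR ?nnegrE ?ltW.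
  - by rewrite pmulr_rgt0 ?subr_gt0 // gt0_ltr_powR ?nnegrE ?ltW.
  - by move=> cm; move/eqP: tm; rewrite /c in cm; lra.
have : 0 < p * ((c `^ (p - 1) - m `^ (p - 1)) * (c - m)) by rewrite mulr_gt0.
rewrite /c in Tc Tm *; nra.
Qed.

Lemma powR_midpoint_lt a b : 0 <= a -> 0 <= b -> a != b ->
  ((a + b) / 2) `^ p < (a `^ p + b `^ p) / 2.
Proof.
move=> a0 b0 /eqP ab.
have m0 : 0 < (a + b) / 2.
  by rewrite divr_gt0 // lt_neqAle addr_ge0 // andbT; apply/eqP => E; apply: ab; lra.
have am : a != (a + b) / 2 by apply/eqP => E; apply: ab; lra.
have bm : b != (a + b) / 2 by apply/eqP => E; apply: ab; lra.
have := powR_tangent_lt _ _ m0 a0 am; have := powR_tangent_lt _ _ m0 b0 bm; lra.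
Qed.

Lemma powR_norm_midpoint_lt s t : s != t ->
  `|(s + t) / 2| `^ p < (`|s| `^ p + `|t| `^ p) / 2.
Proof.
move=> st; have [/eqP|nst] := eqVneq `|s| `|t|.
  rewrite eqr_norm2 (negbTE st) /= => /eqP s_opp; rewrite s_opp in st *.
  have t0 : t != 0 by apply: contraNneq st => ->; rewrite oppr0.
  rewrite addNr mul0r normr0 powR0 ?gt_eqF // normrN.
  have : 0 < `|t| `^ p by rewrite powR_gt0 // normr_gt0.
  lra.
apply: le_lt_trans (powR_midpoint_lt _ _ (normr_ge0 s) (normr_ge0 t) nst).
apply: ge0_ler_powR; rewrite ?nnegrE ?divr_ge0 ?addr_ge0 //; first exact: ltW.
by rewrite normrM normfV (ger0_norm (_ : 0 <= 2)) // ler_pM2r ?ler_normD.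
Qed.

Lemma powR_norm_midpoint_le s t :
  `|(s + t) / 2| `^ p <= (`|s| `^ p + `|t| `^ p) / 2.
Proof.
have [->|st] := eqVneq s t; last exact/ltW/powR_norm_midpoint_lt.
by rewrite (_ : (t + t) / 2 = t); [lra | field].
Qed.
End strictly_convex_powR.

Lemma continuous_powR_norm {R : realType} (r : R) : 0 < r ->
  continuous (fun t : R => `|t| `^ r).
Proof.
move=> r0 t; have [->|t0] := eqVneq t 0.
  apply/cvgrPdist_lt => e e0; rewrite normr0 powR0 ?gt_eqF //.
  near=> s; rewrite sub0r normrN ger0_norm ?powR_ge0 //.
  rewrite -[ltRHS](powRr1 (ltW e0)) -(@mulVf _ r) ?gt_eqF // powRrM.
  apply: gt0_ltr_powR; rewrite ?nnegrE ?powR_ge0 //.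
  near: s; apply/nbhs_normP; exists (e `^ r^-1); first by rewrite /= powR_gt0.
  by move=> s /=; rewrite sub0r normrN.
have nt : 0 < `|t| by rewrite normr_gt0.
have E : {near t, (fun s : R => expR (r * ln `|s|)) =1 (fun s => `|s| `^ r)}.
  near=> s; rewrite /powR gt_eqF ?(mulrC r) //.
  near: s; apply/nbhs_normP; exists `|t| => // s /= ts.
  by rewrite normr_gt0; apply: contraTneq ts => ->; rewrite subr0 ltxx.
apply: cvg_trans (near_eq_cvg E) _.
have -> : `|t| `^ r = expR (r * ln `|t|) by rewrite /powR gt_eqF ?(mulrC r).
apply: (continuous_comp (f := fun s : R => r * ln `|s|)); last exact: continuous_expR.
apply: continuousM; first exact: cvg_cst.
apply: (continuous_comp (f := fun s : R => `|s|)); first exact: norm_continuous.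
exact: continuous_ln.
Unshelve. all: by end_near.
Qed.

Lemma ler_powR2 {R : realType} (r : R) : 0 < r ->
  {in Num.nneg &, {mono @powR R ^~ r : s t / s <= t}}.
Proof. by move=> r0; apply: le_mono_in; exact: (@gt0_ltr_powR R r r0). Qed.

Section lp_norm.
Context {R : realType} {d : nat} (p : R).
Hypothesis p_gt1 : 1 < p.
Implicit Types u v w : 'rV[R]_d.

Let p_gt0 : 0 < p. Proof. exact: lt_trans p_gt1. Qed.

Definition lpsum (w : 'rV[R]_d) := \sum_(j < d) `|w ord0 j| `^ p.

Lemma lpsum_ge0 w : 0 <= lpsum w.
Proof. by apply: sumr_ge0 => j _; exact: powR_ge0. Qed.

Lemma lpnorm_ge0 w : 0 <= lpnorm p w.
Proof. exact: powR_ge0. Qed.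

Lemma lpnorm_powR w : lpnorm p w `^ p = lpsum w.
Proof. by rewrite -powRrM mulVf ?gt_eqF // powRr1 // lpsum_ge0. Qed.

Lemma lpnorm_le w B : 0 <= B -> (lpnorm p w <= B) = (lpsum w <= B `^ p).
Proof. by move=> B0; rewrite -lpnorm_powR ler_powR2 // nnegrE lpnorm_ge0. Qed.

Lemma lpnorm_lt1 w : lpsum w < 1 -> lpnorm p w < 1.
Proof.
move=> lt1; rewrite ltNge -(ler_powR2 _ p_gt0) ?nnegrE ?lpnorm_ge0 //=.
by rewrite lpnorm_powR powR1 -ltNge.
Qed.

Lemma lpnorm_coord_le w j : `|w ord0 j| <= lpnorm p w.
Proof.
rewrite -(ler_powR2 _ p_gt0) ?nnegrE ?lpnorm_ge0 //= lpnorm_powR.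
by rewrite /lpsum (bigD1 j) //= lerDl sumr_ge0 // => i _; exact: powR_ge0.
Qed.

Lemma lpnormZ c w : lpnorm p (c *: w) = `|c| * lpnorm p w.
Proof.
rewrite /lpnorm (_ : \sum_j _ = `|c| `^ p * lpsum w); last first.
  by rewrite mulr_sumr; apply: eq_bigr => j _; rewrite mxE normrM powRM.
by rewrite powRM ?powR_ge0 ?lpsum_ge0 // -powRrM mulfV ?gt_eqF // powRr1.
Qed.

Lemma lpnorm0 : lpnorm p (0 : 'rV[R]_d) = 0.
Proof. by rewrite -(scale0r 0) lpnormZ normr0 mul0r. Qed.

Lemma lpnorm_gt0 w : w != 0 -> 0 < lpnorm p w.
Proof.
apply: contraNT; rewrite -leNgt => w0; apply/eqP/rowP => j; rewrite mxE.
by apply/eqP; rewrite -normr_le0 (le_trans (lpnorm_coord_le w j)).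
Qed.

Lemma lpnorm_normalize w : w != 0 -> lpnorm p ((lpnorm p w)^-1 *: w) = 1.
Proof.
move=> w0; have w_gt0 := lpnorm_gt0 _ w0.
by rewrite lpnormZ ger0_norm ?invr_ge0 ?ltW // mulVf ?gt_eqF.
Qed.

Lemma lpnorm_midpoint_lt1 u v : lpnorm p u <= 1 -> lpnorm p v <= 1 -> u != v ->
  lpnorm p (2^-1 *: (u + v)) < 1.
Proof.
rewrite !lpnorm_le // powR1 => u1 v1 uv; apply: lpnorm_lt1.
have [j uvj] : exists j, u ord0 j != v ord0 j.
  apply/existsP; apply: contraNT uv => /existsPn same.
  by apply/eqP/rowP => j; apply/eqP/negbNE/same.
have mid i : (2^-1 *: (u + v)) ord0 i = (u ord0 i + v ord0 i) / 2 by rewrite !mxE mulrC.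
suff : lpsum (2^-1 *: (u + v)) < (lpsum u + lpsum v) / 2 by lra.
rewrite /lpsum -big_split /= mulr_suml (bigD1 j) //= [ltRHS](bigD1 j) //=.
apply: ltr_leD; first by rewrite mid; exact: powR_norm_midpoint_lt.
by apply: ler_sum => i _; rewrite mid; exact: powR_norm_midpoint_le.
Qed.

Lemma continuous_lpsum : continuous lpsum.
Proof.
apply: continuous_big => [|j _]; first exact: add_continuous.
move=> w; apply: (continuous_comp (f := fun w : 'rV[R]_d => w ord0 j)
  (g := fun t : R => `|t| `^ p)); first exact: coord_continuous.
exact: continuous_powR_norm.
Qed.

Lemma compact_lpball B : 0 <= B -> compact [set w : 'rV[R]_d | lpnorm p w <= B].
Proof.
move=> B0; apply: bounded_closed_compact.
  exists B; split; first exact: num_real.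
  move=> M BM w /= wB; rewrite [X in X <= _]/Num.norm /= mx_normrE.
  apply: bigmax_le => [|[i j] _ /=]; first exact: ltW (le_lt_trans B0 BM).
  by rewrite (ord1 i); apply: le_trans (lpnorm_coord_le w j) (le_trans wB (ltW BM)).
rewrite (_ : [set w | _] = lpsum @^-1` [set s | s <= B `^ p]).
  by apply: preimage_closed => [w _|]; [exact: continuous_lpsum | exact: closed_le].
by apply/seteqP; split => w /=; rewrite lpnorm_le.
Qed.
End lp_norm.

Lemma continuous_bigmin {R : realType} (T : topologicalType) (I : Type) (r : seq I)
    (f0 : T -> R) (F : I -> T -> R) :
  continuous f0 -> (forall i, continuous (F i)) ->
  continuous (fun t => \big[Num.min/f0 t]_(i <- r) F i t).
Proof.
move=> f0_cont F_cont; elim: r => [|i r IHr] t.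
  by under eq_fun do rewrite big_nil; exact: f0_cont.
by under eq_fun do rewrite big_cons; exact: continuous_min (F_cont i t) (IHr t).
Qed.

Section dotp.
Context {R : realType} {d : nat}.
Implicit Types v w : 'rV[R]_d.

Lemma dotpC v w : dotp v w = dotp w v.
Proof. by apply: eq_bigr => j _; rewrite mulrC. Qed.

Lemma dotpZr v w c : dotp v (c *: w) = c * dotp v w.
Proof. by rewrite /dotp mulr_sumr; apply: eq_bigr => j _; rewrite mxE mulrCA. Qed.

Lemma dotpDr v w1 w2 : dotp v (w1 + w2) = dotp v w1 + dotp v w2.
Proof. by rewrite /dotp -big_split; apply: eq_bigr => j _; rewrite mxE mulrDr. Qed.

Lemma continuous_dotp v : continuous (dotp v).
Proof.
apply: continuous_big => [|j _]; first exact: add_continuous.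
by move=> w; apply: continuousM; [exact: cst_continuous | exact: coord_continuous].
Qed.
End dotp.

Section margin.
Variables (R : realType) (d n : nat) (p : R).
Variables (x : 'I_n -> 'rV[R]_d) (y : 'I_n -> R).
Hypothesis n_gt0 : (0 < n)%N.
Hypothesis p_gt1 : 1 < p.
Implicit Types v w : 'rV[R]_d.

Definition sample_margin i w := y i * dotp (x i) w.

Definition margin w :=
  \big[Num.min/sample_margin (Ordinal n_gt0) w]_(i < n) sample_margin i w.

Lemma margin_le i w : margin w <= sample_margin i w.
Proof. exact: bigmin_le. Qed.

Lemma margin_geP w g : margin_ge x y w g <-> g <= margin w.
Proof.
split=> [g_le|/bigmin_geP[_ g_le] i]; last exact: g_le.
by apply/bigmin_geP; split=> [|i _]; exact: g_le.
Qed.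

Lemma margin_gt w g : (forall i, g < sample_margin i w) -> g < margin w.
Proof. by move=> g_lt; apply/bigmin_gtP; split=> [|i _]; exact: g_lt. Qed.

Lemma sample_marginZ i c w : sample_margin i (c *: w) = c * sample_margin i w.
Proof. by rewrite /sample_margin dotpZr mulrCA. Qed.

Lemma sample_marginD i v w :
  sample_margin i (v + w) = sample_margin i v + sample_margin i w.
Proof. by rewrite /sample_margin dotpDr mulrDr. Qed.

Lemma sample_margin0 i : sample_margin i 0 = 0.
Proof. by rewrite -(scale0r (0 : 'rV[R]_d)) sample_marginZ mul0r. Qed.

Lemma continuous_margin : continuous margin.
Proof.
have sm_cont i : continuous (sample_margin i).
  by move=> w; apply: continuousM; [exact: cst_continuous | exact: continuous_dotp].
exact: continuous_bigmin.
Qed.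

Lemma max_marginE w : max_margin p x y w <->
  lpnorm p w <= 1 /\ forall v, lpnorm p v <= 1 -> margin v <= margin w.
Proof.
split=> -[w1 w_max]; split=> // v v1.
  by apply/margin_geP/(w_max v v1)/margin_geP.
by move=> g /margin_geP g_le; apply/margin_geP/(le_trans g_le)/w_max.
Qed.

Lemma exists_max_margin : exists w, max_margin p x y w.
Proof.
have ball0 : [set w : 'rV[R]_d | lpnorm p w <= 1] !=set0.
  by exists 0; rewrite /= lpnorm0.
have [c c1 c_max] := EVT_max_rV ball0 (compact_lpball p p_gt1 1 ler01)
  (continuous_subspaceT continuous_margin).
exists c; apply/max_marginE; split; first by move: c1; rewrite inE.
by move=> v v1; apply: c_max; rewrite inE.
Qed.

Hypothesis y_sign : forall i, y i = 1 \/ y i = -1.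
Hypothesis separable : lin_separable x y.

Lemma max_margin_gt0 wmm : max_margin p x y wmm -> 0 < margin wmm.
Proof.
move=> /max_marginE[_ wmm_max]; have [ws ws_sg] := separable.
have ws_pos i : 0 < sample_margin i ws.
  have := y_sign i; rewrite /sample_margin dotpC -ws_sg.
  case: (ltrgt0P (dotp ws (x i))) => [t_gt0|t_lt0|->]; last by rewrite sgr0 => -[]; lra.
    by rewrite gtr0_sg // mul1r.
  by rewrite ltr0_sg // mulN1r oppr_gt0.
have ws0 : ws != 0.
  apply: contraTneq (ws_pos (Ordinal n_gt0)) => ->.
  by rewrite sample_margin0 ltxx.
have ws1 : lpnorm p ((lpnorm p ws)^-1 *: ws) <= 1 by rewrite lpnorm_normalize.
apply: lt_le_trans (wmm_max _ ws1).
apply: margin_gt => i; rewrite sample_marginZ mulr_gt0 // invr_gt0.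
exact: lpnorm_gt0.
Qed.

Lemma margin_lt_max_margin wmm w : max_margin p x y wmm ->
  lpnorm p w <= 1 -> w != wmm -> margin w < margin wmm.
Proof.
move=> wmm_mm w1 w_neq; have gmm := max_margin_gt0 _ wmm_mm.
case/max_marginE: wmm_mm => wmm1 wmm_max; rewrite ltNge; apply/negP => w_ge.
(* the midpoint m is as good as wmm but lies strictly inside the ball,
   so rescaling m to the unit sphere beats wmm *)
pose m := 2^-1 *: (w + wmm).
have m1 : lpnorm p m < 1 by apply: lpnorm_midpoint_lt1.
have m_ge i : margin wmm <= sample_margin i m.
  rewrite sample_marginZ sample_marginD mulrC ler_pdivlMr // mulr_natr mulr2n.
  by apply: lerD; [exact: le_trans w_ge (margin_le i w) | exact: margin_le].
have m0 : m != 0.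
  by apply: contraTneq (m_ge (Ordinal n_gt0)) => ->; rewrite sample_margin0 -ltNge.
have m_gt0 : 0 < lpnorm p m by apply: lpnorm_gt0.
have u1 : lpnorm p ((lpnorm p m)^-1 *: m) <= 1 by rewrite lpnorm_normalize.
have := wmm_max _ u1; rewrite leNgt => /negP; apply; apply: margin_gt => i.
rewrite sample_marginZ; apply: lt_le_trans (_ : (lpnorm p m)^-1 * margin wmm <= _).
  by rewrite (ltr_pMl _ gmm) (invf_gt1 m_gt0); exact: m1.
by rewrite ler_pM2l ?invr_gt0; [exact: m_ge | exact: m_gt0].
Qed.

Lemma max_margin_isolated wmm e : max_margin p x y wmm -> 0 < e ->
  exists2 g, 0 < g < margin wmm &
    forall w, lpnorm p w <= 1 -> g < margin w -> `|wmm - w| < e.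
Proof.
move=> wmm_mm e0; have gmm := max_margin_gt0 _ wmm_mm.
have half_lt : margin wmm / 2 < margin wmm by rewrite ltr_pdivrMr // ltr_pMr // ltr1n.
have half_gt0 : 0 < margin wmm / 2 by rewrite divr_gt0.
pose K := [set w | lpnorm p w <= 1] `&` [set w | e <= `|wmm - w|].
have [K0|K0] := pselect (K !=set0); last first.
  exists (margin wmm / 2); first by rewrite half_lt half_gt0.
  by move=> w w1 _; rewrite ltNge; apply/negP => far; apply: K0; exists w.
have cK : compact K.
  apply: compact_closedI (compact_lpball p p_gt1 1 ler01) _.
  apply: (@preimage_closed _ _ (fun w => `|wmm - w|) [set r | e <= r]).
    move=> w _; apply: (continuous_comp (f := fun w => wmm - w)).
      by apply: continuousB; [exact: cst_continuous | exact: cvg_id].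
    exact: norm_continuous.
  exact: closed_ge.
have [c] := EVT_max_rV K0 cK (continuous_subspaceT continuous_margin).
rewrite inE => -[c1 c_far] c_max.
have c_lt : margin c < margin wmm.
  apply: margin_lt_max_margin => //; apply: contraTneq c_far => ->.
  by rewrite subrr normr0 -ltNge.
exists (Num.max (margin c) (margin wmm / 2)).
  by rewrite lt_max gt_max c_lt half_gt0 half_lt orbT.
move=> w w1; rewrite gt_max => /andP[w_gt _].
rewrite ltNge; apply: contraTN w_gt => far.
by rewrite -leNgt; apply: c_max; rewrite inE.
Qed.

Variables (ell : R -> R) (a b : R).
Hypothesis ell_nonincr : {homo ell : s t /~ s <= t}.
Hypothesis ell_convex : forall s t c : R, 0 <= c <= 1 ->
  ell (c * s + (1 - c) * t) <= c * ell s + (1 - c) * ell t.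
Hypothesis ell_ge0 : forall z, 0 <= ell z.

Lemma continuous_loss : continuous (loss ell x y).
Proof.
move=> w; apply: (continuousM (s := fun=> n%:R^-1)
  (t := fun w => \sum_(i < n) ell (y i * dotp w (x i)))); first exact: cst_continuous.
move: w; apply: continuous_big => [|i _]; first exact: add_continuous.
move=> w; apply: (continuous_comp (f := fun w => y i * dotp w (x i)) (g := ell)).
  apply: continuousM; first exact: cst_continuous.
  rewrite (_ : (fun w => _) = dotp (x i)); first exact: continuous_dotp.
  by apply/funext => v; exact: dotpC.
exact: continuous_convex_nonincreasing.
Qed.

Lemma exists_reg_minimizer B : 0 <= B -> exists w, reg_minimizer p ell x y B w.
Proof.
move=> B0; have ball0 : [set w : 'rV[R]_d | lpnorm p w <= B] !=set0.
  by exists 0; rewrite /= lpnorm0.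
have [c cB c_min] := EVT_min_rV ball0 (compact_lpball p p_gt1 B B0)
  (continuous_subspaceT continuous_loss).
exists c; split; first by move: cB; rewrite inE.
by move=> v vB; apply: c_min; rewrite inE.
Qed.

Lemma sample_loss_le i w : n%:R^-1 * ell (sample_margin i w) <= loss ell x y w.
Proof.
rewrite /loss ler_wpM2l ?invr_ge0 ?ler0n // (bigD1 i) //= /sample_margin dotpC lerDl.
by apply: sumr_ge0.
Qed.

Lemma loss_scale_le B w : 0 <= B -> loss ell x y (B *: w) <= ell (B * margin w).
Proof.
move=> B0; rewrite /loss.
apply: le_trans (_ : n%:R^-1 * \sum_(i < n) ell (B * margin w) <= _).
  apply: ler_wpM2l; first by rewrite invr_ge0 ler0n.
  apply: ler_sum => i _; apply: ell_nonincr.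
  by rewrite dotpC -/(sample_margin _ _) sample_marginZ ler_wpM2l // margin_le.
by rewrite sumr_const card_ord -(mulr_natl (ell _) n) mulKf ?pnatr_eq0 -?lt0n.
Qed.

Hypothesis ell_tail : (fun z => ell z * expR (a * z)) @ +oo --> b.
Hypotheses (a_gt0 : 0 < a) (b_gt0 : 0 < b).

Lemma reg_minimizer_margin_gt wmm g : max_margin p x y wmm -> 0 < g < margin wmm ->
  \forall B \near +oo, forall w, reg_minimizer p ell x y B w -> g < margin (B^-1 *: w).
Proof.
move=> wmm_mm g_in; have [wmm1 _] := wmm_mm.
near=> B.
have B0 : 0 < B by near: B; exact: nbhs_pinfty_gt.
have tail : n%:R * ell (B * margin wmm) < ell (B * g).
  by near: B; apply: (exp_tail_ratio_gt a_gt0 b_gt0 ell_tail); rewrite ?ltr0n.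
move=> w [wB w_min]; apply: margin_gt => i.
rewrite sample_marginZ -(ltr_pM2l B0) mulrA mulfV ?gt_eqF // mul1r ltNge.
apply: contraTN tail => /ell_nonincr sm_le; rewrite -leNgt.
have : n%:R^-1 * ell (B * g) <= ell (B * margin wmm).
  apply: le_trans (loss_scale_le B wmm (ltW B0)); apply: le_trans (w_min _ _); last first.
    by rewrite lpnormZ // (gtr0_norm B0) -[leRHS]mulr1 ler_pM2l.
  by apply: le_trans (sample_loss_le i w); rewrite ler_wpM2l ?invr_ge0 ?ler0n.
by rewrite ler_pdivrMl ?ltr0n.
Unshelve. all: by end_near.
Qed.

Lemma reg_direction_cvg wmm : max_margin p x y wmm ->
  forall wbar : R -> 'rV[R]_d, (forall B, 0 < B -> reg_minimizer p ell x y B (wbar B)) ->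
  (fun B => B^-1 *: wbar B) @ +oo --> wmm.
Proof.
move=> wmm_mm wbar wbar_min; apply/cvgrPdist_lt => e e0.
have [g g_in wmm_near] := max_margin_isolated _ _ wmm_mm e0.
near=> B.
have B0 : 0 < B by near: B; exact: nbhs_pinfty_gt.
have margin_gt_g : forall w, reg_minimizer p ell x y B w -> g < margin (B^-1 *: w).
  by near: B; exact: (reg_minimizer_margin_gt _ _ wmm_mm g_in).
have [wB _] := wbar_min B B0.
apply: wmm_near; last exact/margin_gt_g/wbar_min.
rewrite lpnormZ // (gtr0_norm (_ : 0 < B^-1)) ?invr_gt0 // -(mulVf (lt0r_neq0 B0)).
by rewrite ler_pM2l ?invr_gt0.
Unshelve. all: by end_near.
Qed.
End margin.

Theorem proposition1 (R : realType) (d n : nat) (p q C a b : R)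
  (x : 'I_n -> 'rV[R]_d) (y : 'I_n -> R) (ell : R -> R) :
  (0 < n)%N ->
  1 < p -> 0 < q -> p^-1 + q^-1 = 1 ->
  (forall i, y i = 1 \/ y i = -1) ->
  lin_separable x y ->
  (forall i, lpnorm q (x i) < C) ->
  (* ell decreasing *)
  (forall z1 z2 : R, z1 < z2 -> ell z2 < ell z1) ->
  (* ell convex *)
  (forall (z1 z2 t : R), 0 <= t <= 1 ->
     ell (t * z1 + (1 - t) * z2) <= t * ell z1 + (1 - t) * ell z2) ->
  (* ell does not attain its minimum *)
  (forall z, exists z', ell z' < ell z) ->
  (* inf ell = 0 *)
  (forall z, 0 <= ell z) ->
  (forall e : R, 0 < e -> exists z, ell z < e) ->
  (* exponential tail *)
  0 < a -> 0 < b ->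
  (fun z => ell z * expR (a * z)) @ +oo --> b ->
  (* conclusion *)
  (forall B : R, 0 < B -> exists w, reg_minimizer p ell x y B w) /\
  (exists wmm, max_margin p x y wmm) /\
  (forall wmm, max_margin p x y wmm ->
   forall wbar : R -> 'rV[R]_d,
     (forall B : R, 0 < B -> reg_minimizer p ell x y B (wbar B)) ->
     (fun B => B^-1 *: wbar B) @ +oo --> wmm).
Proof.
move=> n_gt0 p_gt1 _ _ y_sign separable _ ell_decr ell_convex _ ell_ge0 _
  a_gt0 b_gt0 ell_tail.
have ell_nonincr : {homo ell : s t /~ s <= t} := ltW_nhomo (fun s t => ell_decr t s).
split; first by move=> B /ltW; exact: exists_reg_minimizer.
split; first exact: exists_max_margin.
move=> wmm; exact: (@reg_direction_cvg R d n p x y n_gt0 p_gt1 y_sign separable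
  ell a b ell_nonincr ell_ge0 ell_tail a_gt0 b_gt0).
Qed.
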